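(* Let $M$ be a finite monoid. (i) If $M$ is almost R-trivial and the partial order $\mathbb{X}(M)$ is linear, then $M$ is Ramsey. (ii) If $\mathbb{X}(M)$ is not linear, then the sequence of pointed $M$-sets $X_n=\mathbb{X}(M)$ ($n\in\mathbb{N}$), with the canonical action of $M$ and with $1_MM=M$ as the distinguished point, does not have the Ramsey property. Consequently, if $M$ is almost R-trivial, then $M$ is Ramsey if and only if $\mathbb{X}(M)$ is linear.
   Context: $\mathbb{X}(M)=\{aM:a\in M\}$ ordered by inclusion, with canonical action $b\cdot aM=baM$. $M$ is almost R-trivial if for each $b\in M$ such that $b'M=bM$ for some $b'\neq b$, $ab=b$ for all $a\in M$. A pointed $M$-set is an $M$-set $X$ (identity acting trivially) with a distinguished point $x$ such that $Mx=X$. For a sequence $(X_n)$ of sets, $\langle(X_n)\rangle$ is the set of finite sequences $x_1\cdots x_k$ with $x_i\in X_{m_i}$ for some $m_1<\cdots<m_k$, a partial semigroup under concatenation (product of $x_1\cdots x_k$ and $y_1\cdots y_l$ defined iff there are $m_1<\dots<m_k<n_1<\dots<n_l$ with $x_i\in X_{m_i}$, $y_j\in X_{n_j}$); $M$ acts coordinatewise. A sequence $(w_i)$ in $\langle(X_n)\rangle$ is basic if $w_{i_1}\cdots w_{i_k}$ is defined for all $i_1<\cdots<i_k$. A sequence $(X_n)$ of pointed $M$-sets has the Ramsey property if for every finite coloring of $\langle(X_n)\rangle$ there is a basic sequence $(w_i)$ such that each $w_i$ has as an entry the distinguished element of the $X_n$ from which that entry comes, and all words $a_0(w_{i_0})\cdots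 a_l(w_{i_l})$ with $l\in\mathbb{N}$, $i_0<\cdots<i_l$, $a_0,\dots,a_l\in M$ and at least one $a_j=1_M$ receive the same color. $M$ is Ramsey if every sequence of pointed $M$-sets has the Ramsey property. *)

From mathcomp Require Import all_boot.
Set Implicit Arguments. Unset Strict Implicit. Unset Printing Implicit Defensive.

Record finMonoid := FinMonoid {
  mcar :> finType;
  mmul : mcar -> mcar -> mcar;
  mone : mcar;
  mmulA : associative mmul;
  mmul1 : left_id mone mmul;
  mmulr1 : right_id mone mmul }.

Section Defs.
Variable M : finMonoid.
Local Notation "a * b" := (mmul a b).
Local Notation "1" := (mone M).

Definition rideal (a : M) : {set M} := [set a * b | b in M].

Definition XM : {set {set M}} := [set rideal a | a in M].

Definition XM_linear : Prop :=
  forall I J, I \in XM -> J \in XM -> (I \subset J) || (J \subset I).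

Definition almost_R_trivial : Prop :=
  forall b : M, (exists b' : M, b' <> b /\ rideal b' = rideal b) ->
    forall a : M, a * b = b.

Definition is_pointed_Mset (X : Type) (act : M -> X -> X) (x0 : X) : Prop :=
  [/\ forall x, act 1 x = x,
      forall a b x, act a (act b x) = act (a * b) x
    & forall x, exists a, x = act a x0].

Section Words.
Variables (X : nat -> Type) (act : forall n, M -> X n -> X n)
          (pt : forall n, X n).

Definition letter := {n : nat & X n}.

(* elements of <(X_n)>: nonempty finite sequences whose letters come from
   strictly increasing indices *)
Definition is_word (w : seq letter) : Prop :=
  w <> [::] /\ sorted ltn (map (@projT1 _ _) w).

Definition act_word (a : M) (w : seq letter) : seq letter :=
  map (fun e => existT X (projT1 e) (act a (projT2 e))) w.

Definition has_pt_entry (w : seq letter) : Prop :=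
  exists n u v, w = u ++ existT X n (pt n) :: v.

(* basic sequence: w_{i_1} ... w_{i_k} defined for all i_1 < ... < i_k *)
Definition basic (w : nat -> seq letter) : Prop :=
  (forall i, is_word (w i)) /\
  forall s : seq nat, s <> [::] -> sorted ltn s -> is_word (flatten (map w s)).

Definition ramsey_prop : Prop :=
  forall (r : nat) (c : seq letter -> 'I_r),
  exists w : nat -> seq letter,
    [/\ basic w, forall i, has_pt_entry (w i) &
      exists col : 'I_r,
        forall s : seq (nat * M),
          s <> [::] -> sorted ltn (map fst s) ->
          (exists2 p, p \in s & p.2 = 1) ->
          c (flatten (map (fun p => act_word p.2 (w p.1)) s)) = col].

End Words.

Definition ramsey_monoid : Prop :=
  forall (X : nat -> Type) (act : forall n, M -> X n -> X n) (pt : forall n, X n),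
    (forall n, is_pointed_Mset (act n) (pt n)) -> ramsey_prop act pt.

Definition XM_t := {I : {set M} | I \in XM}.

Lemma XM_act_proof (b : M) (I : XM_t) : [set b * x | x in val I] \in XM.
Proof.
case: I => I /= /imsetP [a _ ->]; apply/imsetP; exists (b * a) => //.
apply/setP => y; apply/imsetP/imsetP.
- by case=> x /imsetP [z _ ->] ->; exists z => //; rewrite mmulA.
- by case=> z _ ->; exists (a * z); [apply/imsetP; exists z | rewrite mmulA].
Qed.

Definition XM_act (b : M) (I : XM_t) : XM_t := exist (fun J => J \in XM) _ (XM_act_proof b I).

Lemma XM_pt_proof : rideal 1 \in XM.
Proof. by apply/imsetP; exists 1. Qed.

Definition XM_pt : XM_t := exist (fun J => J \in XM) _ XM_pt_proof.

End Defs.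

(* (i) follows the Galvin-Glazer method.  Ultrafilters on words of
   <(X_n)> concentrated on arbitrarily late blocks form a compact
   right-topological semigroup on which M acts by continuous endomorphisms.
   Climbing the chain X(M) one right ideal at a time (it is a chain by
   linearity, and almost R-triviality makes every nontrivial R-class consist
   of right zeros), minimal-idempotent arguments produce an idempotent [u]
   containing a letter 1 with [u <= a u] for every [a].  A colour class
   chosen by [u] then yields, block after block, a basic sequence all of
   whose combinations a_0 w_i0 ... a_l w_il with some a_j = 1 stay in that
   class; a general sequence of pointed M-sets is reached through the orbit
   maps a |-> a x_n.
   (ii) If aM and bM are incomparable, colour a word by which of aM, bM
   occurs first among its entries: a w_0 w_1 and b w_0 w_1 get different
   colours, since w_0 contains the point M. *)

From mathcomp Require Import all_boot.
From mathcomp Require Import boolp.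
From mathcomp Require classical_sets filter.
From Stdlib Require List.
Set Implicit Arguments. Unset Strict Implicit. Unset Printing Implicit Defensive.

Lemma zorn_minimal (U : Type) (P : (U -> Prop) -> Prop) (K0 : U -> Prop) :
  P K0 ->
  (forall C : (U -> Prop) -> Prop, (exists K, C K) -> (forall K, C K -> P K) ->
     (forall K1 K2, C K1 -> C K2 -> (forall u, K1 u -> K2 u) \/ (forall u, K2 u -> K1 u)) ->
     P (fun u => forall K, C K -> K u)) ->
  exists K, [/\ P K, (forall u, K u -> K0 u) &
     forall K', P K' -> (forall u, K' u -> K u) -> forall u, K u -> K' u].
Proof.
move=> PK0 hC.
pose Sp K := P K /\ forall u, K u -> K0 u.
pose S := {K : U -> Prop | Sp K}.
pose R (a b : S) := `[< forall u, sval b u -> sval a u >].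
have [[K [PK KK0]] Kmin] : exists t : S, forall s, R t s -> s = t.
  apply: classical_sets.Zorn.
  - by move=> t; apply/asboolP.
  - by move=> r s t /asboolP h1 /asboolP h2; apply/asboolP => u /h2 /h1.
  - move=> [a [Pa ha]] [b [Pb hb]] /asboolP h1 /asboolP h2.
    have e : a = b by apply: funext => u; apply: propext; split; [apply: h2|apply: h1].
    by subst b; congr exist; exact: Prop_irrelevance.
  - move=> A Atot; case: (pselect (exists t, A t)) => [[t At]|nA]; last first.
      by exists (exist Sp K0 (conj PK0 (fun u h => h))) => s As; exfalso; apply: nA; exists s.
    pose C K := exists2 s : S, A s & sval s = K.
    have PC : P (fun u => forall K, C K -> K u).
      apply: hC; first by exists (sval t), t.
        by move=> K [s _ <-]; case: (svalP s).
      move=> K1 K2 [s1 As1 <-] [s2 As2 <-].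
      by case: (Atot _ _ As1 As2) => /asboolP h; [right|left].
    have sub : forall u, (forall K, C K -> K u) -> K0 u.
      by move=> u /(_ (sval t)) h; apply: (proj2 (svalP t)); apply: h; exists t.
    exists (exist Sp _ (conj PC sub)) => s As; apply/asboolP => u /= /(_ (sval s)); apply.
    by exists s.
exists K; split => // K' PK' sub u Ku.
have KK : forall u, K' u -> K0 u by move=> w /sub /KK0.
have h : R (exist Sp K (conj PK KK0)) (exist Sp K' (conj PK' KK)) by apply/asboolP.
by case: (Kmin _ h) => ->.
Qed.

Section Ultrafilter.
Variable T : Type.

Definition is_ultra (F : (T -> Prop) -> Prop) : Prop :=
  [/\ F (fun _ => True), ~ F (fun _ => False),
      forall A B, F A -> F B -> F (fun x => A x /\ B x),
      forall A B : T -> Prop, (forall x, A x -> B x) -> F A -> F B &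
      forall A, F A \/ F (fun x => ~ A x)].

Record ultra := Ultra { ultra_sets :> (T -> Prop) -> Prop; ultraP : is_ultra ultra_sets }.

Implicit Types (u v : ultra) (A B : T -> Prop).

Lemma ufT u : u (fun _ => True). Proof. by case: u => F /= []. Qed.
Lemma uf0 u : ~ u (fun _ => False). Proof. by case: u => F /= []. Qed.
Lemma ufI u A B : u A -> u B -> u (fun x => A x /\ B x).
Proof. by case: u => F /= [_ _ hI _ _]; apply: hI. Qed.
Lemma ufS u A B : (forall x, A x -> B x) -> u A -> u B.
Proof. by case: u => F /= [_ _ _ hS _]; apply: hS. Qed.
Lemma ufC u A : u A \/ u (fun x => ~ A x). Proof. by case: u => F /= []. Qed.

Lemma uf_exists u A : u A -> exists x, A x.
Proof.
move=> uA; apply: contrapT => nex; apply: (@uf0 u).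
by apply: ufS uA => x Ax; apply: nex; exists x.
Qed.

Lemma ufN u A : u (fun x => ~ A x) <-> ~ u A.
Proof.
split; last by case: (ufC u A).
by move=> uNA uA; have /uf_exists [x []] := ufI uA uNA.
Qed.

Lemma uf_and u A B : u (fun x => A x /\ B x) <-> u A /\ u B.
Proof.
split; last by case; apply: ufI.
by move=> h; split; apply: ufS h => x [].
Qed.

Lemma uf_all (X : eqType) u (s : seq X) (P : X -> T -> Prop) :
  (forall a, a \in s -> u (P a)) -> u (fun x => forall a, a \in s -> P a x).
Proof.
elim: s => [|a s IH] h; first by apply: ufS (ufT u).
have hs : forall b, b \in s -> u (P b) by move=> b bs; apply: h; rewrite inE bs orbT.
apply: ufS (ufI (h a (mem_head _ _)) (IH hs)) => x [Pa Ps] b.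
by rewrite inE => /orP [/eqP ->|/Ps].
Qed.

Lemma ultra_ext u v : (forall A, u A -> v A) -> u = v.
Proof.
move=> uv; have e : forall A, u A <-> v A.
  move=> A; split; first exact: uv.
  move=> vA; case: (ufC u A) => // /uv vNA.
  by have /uf_exists [x []] := ufI vA vNA.
case: u v uv e => F FP [G GP] /= _ e.
have FG : F = G by apply: funext => A; apply: propext.
by subst G; congr Ultra; exact: Prop_irrelevance.
Qed.

Lemma principal_ultraP (t : T) : is_ultra (fun A => A t).
Proof.
split => //; first by move=> A B /(_ t).
by move=> A; case: (pselect (A t)); [left|right].
Qed.

Definition principal_ultra (t : T) := Ultra (principal_ultraP t).

Lemma ultra_of_fip (Fam : (T -> Prop) -> Prop) :
  (forall s : seq (T -> Prop), (forall A, List.In A s -> Fam A) ->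
     exists x, forall A, List.In A s -> A x) ->
  exists u : ultra, forall A, Fam A -> u A.
Proof.
move=> fip.
pose F A := exists s : seq (T -> Prop),
  (forall B, List.In B s -> Fam B) /\ (forall x, (forall B, List.In B s -> B x) -> A x).
have FF : filter.ProperFilter F.
  split; last first.
    split; first by exists [::].
    - move=> A B [s [sF sA]] [s' [s'F s'B]]; exists (s ++ s'); split.
        by move=> C /List.in_app_iff [] ?; [apply: sF|apply: s'F].
      by move=> x hx; split; [apply: sA|apply: s'B] => C Cs; apply: hx;
        apply/List.in_app_iff; [left|right].
    - by move=> A B AB [s [sF sA]]; exists s; split => // x /sA; exact: AB.
  by case=> s [sF s0]; have [x hx] := fip s sF; exact: (s0 x hx).
have [G [GU FG]] := filter.ultraFilterLemma FF.
have Gu : is_ultra G.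
  split.
  - exact: filter.filterT.
  - exact: filter.filter_not_empty.
  - by move=> A B; apply: filter.filterI.
  - by move=> A B AB; apply: filter.filterS.
  - by move=> A; apply: filter.in_ultra_setVsetC.
exists (Ultra Gu) => A FA /=; apply: FG; exists [:: A]; split; first by move=> B [<-|].
by move=> x /(_ A (or_introl erefl)).
Qed.

(* Closed sets of the Stone-Cech topology: [K] contains its closure. *)
Definition uclosed (K : ultra -> Prop) :=
  forall v : ultra, (forall A, (forall u, K u -> u A) -> v A) -> K v.

Lemma uclosed_inter (I : Type) (K : I -> ultra -> Prop) :
  (forall i, uclosed (K i)) -> uclosed (fun u => forall i, K i u).
Proof. by move=> cK v hv i; apply: cK => A hA; apply: hv => u /(_ i) /hA. Qed.

Lemma uclosedI (K1 K2 : ultra -> Prop) :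
  uclosed K1 -> uclosed K2 -> uclosed (fun u => K1 u /\ K2 u).
Proof.
move=> c1 c2 v hv; split; [apply: c1|apply: c2] => A hA; apply: hv => u [].
  by move=> /hA.
by move=> _ /hA.
Qed.

Lemma uclosed_mem A : uclosed (fun u => u A). Proof. by move=> v; apply. Qed.

Lemma uclosed_impl (P : Prop) (K : ultra -> Prop) :
  (P -> uclosed K) -> uclosed (fun u => P -> K u).
Proof. by move=> h v hv p; apply: (h p) => A hA; apply: hv => u /(_ p) /hA. Qed.

(* [phi] is the continuous extension of a map on [T] described by its
   preimage operator [Phi]: the basic open set of [A] is pulled back to that
   of [Phi A]. *)
Definition contmap (phi : ultra -> ultra) (Phi : (T -> Prop) -> T -> Prop) :=
  forall x A, phi x A <-> x (Phi A).

Section Continuous.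
Variables (phi : ultra -> ultra) (Phi : (T -> Prop) -> T -> Prop).
Hypothesis cphi : contmap phi Phi.

Lemma Phi_principal A t : Phi A t <-> phi (principal_ultra t) A.
Proof. by rewrite cphi. Qed.

Lemma PhiN A t : Phi (fun x => ~ A x) t <-> ~ Phi A t.
Proof. by rewrite !Phi_principal ufN. Qed.

Lemma PhiI A B t : Phi (fun x => A x /\ B x) t <-> Phi A t /\ Phi B t.
Proof. by rewrite !Phi_principal uf_and. Qed.

Lemma uclosed_preim (K : ultra -> Prop) c :
  uclosed K -> uclosed (fun x => K x /\ phi x = c).
Proof.
move=> cK v hv; split; first by apply: cK => A hA; apply: hv => u [/hA].
apply: contrapT => ne.
have [A [cA vnA]] : exists A, c A /\ ~ phi v A.
  apply: contrapT => h; apply: ne; apply/esym/ultra_ext => A cA.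
  by apply: contrapT => nA; apply: h; exists A.
have : ~ (forall u, K u /\ phi u = c -> u (fun t => ~ Phi (fun y => ~ A y) t)).
  by move=> /hv; rewrite ufN -cphi ufN.
by apply; move=> u [_ e]; rewrite ufN -cphi ufN e; apply.
Qed.

Lemma uclosed_fix (K : ultra -> Prop) : uclosed K -> uclosed (fun x => K x /\ phi x = x).
Proof.
move=> cK v hv; split; first by apply: cK => A hA; apply: hv => u [/hA].
apply: contrapT => ne.
have [A [vA vnA]] : exists A, v A /\ ~ phi v A.
  apply: contrapT => h; apply: ne; apply/ultra_ext => A pA.
  apply: contrapT => nA; apply: h; exists (fun x => ~ A x); split; first by rewrite ufN.
  by rewrite ufN; apply.
have vD : v (fun t => A t /\ Phi (fun y => ~ A y) t) by apply: ufI => //; rewrite -cphi ufN.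
have : ~ (forall u, K u /\ phi u = u -> u (fun t => ~ (A t /\ Phi (fun y => ~ A y) t))).
  by move=> /hv; rewrite ufN.
by apply; move=> u [_ e]; rewrite ufN uf_and -cphi e ufN; tauto.
Qed.

Lemma uclosed_image (K : ultra -> Prop) :
  uclosed K -> uclosed (fun y => exists2 x, K x & phi x = y).
Proof.
move=> cK v hv.
pose Fam A := (forall u, K u -> u A) \/ exists2 B, v B & A = Phi B.
have [x hx] : exists u : ultra, forall A, Fam A -> u A.
  apply: ultra_of_fip => s sF.
  have [F [B [FK vB sub]]] : exists F B, [/\ (forall u, K u -> u F), v B &
      forall t, F t -> Phi B t -> forall A, List.In A s -> A t].
    elim: s sF => [|A s IH] sF.
      by exists (fun _ => True), (fun _ => True); split => //; [move=> u _|]; exact: ufT.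
    have [|F [B [FK vB sub]]] := IH; first by move=> C Cs; apply: sF; right.
    case: (sF A (or_introl erefl)) => [AK|[B' vB' ->]].
      exists (fun t => A t /\ F t), B; split => //.
        by move=> u Ku; apply: ufI; [apply: AK|apply: FK].
      by move=> t [At Ft] PB C [<-|Cs] //; apply: sub.
    exists F, (fun t => B t /\ B' t); split => //; first exact: ufI.
    by move=> t Ft /PhiI [PB PB'] C [<-|Cs] //; exact: sub.
  apply: contrapT => nex.
  have sub' : forall t, F t -> Phi (fun x => ~ B x) t.
    by move=> t Ft; rewrite PhiN => PB; apply: nex; exists t; exact: sub.
  have : v (fun x => ~ B x).
    by apply: hv => _ [u Ku <-]; rewrite cphi; apply: ufS (FK _ Ku); exact: sub'.
  by rewrite ufN.
exists x; first by apply: cK => A hA; apply: hx; left.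
by apply/esym/ultra_ext => A vA; rewrite cphi; apply: hx; right; exists A.
Qed.

End Continuous.

(* Compactness, restricted to chains. *)
Lemma chain_inter (C : (ultra -> Prop) -> Prop) :
  (exists K, C K) -> (forall K, C K -> uclosed K /\ exists u, K u) ->
  (forall K1 K2, C K1 -> C K2 -> (forall u, K1 u -> K2 u) \/ (forall u, K2 u -> K1 u)) ->
  uclosed (fun u => forall K, C K -> K u) /\ exists v, forall K, C K -> K v.
Proof.
move=> [K0 CK0] hC tot.
have cC : uclosed (fun u => forall K, C K -> K u).
  move=> v hv K CK; have [cK _] := hC _ CK.
  by apply: cK => A hA; apply: hv => u /(_ K CK) /hA.
split => //.
pose Fam A := exists2 K, C K & forall u, K u -> u A.
have [v hv] : exists u : ultra, forall A, Fam A -> u A.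
  apply: ultra_of_fip => s sF.
  have [K [CK hK]] : exists K, C K /\ forall A, List.In A s -> forall u, K u -> u A.
    elim: s sF => [|A s IH] sF; first by exists K0.
    have [|K [CK hK]] := IH; first by move=> B Bs; apply: sF; right.
    have [K' CK' hK'] := sF A (or_introl erefl).
    case: (tot _ _ CK CK') => sub.
      by exists K; split => // B [<-|Bs] u Ku; [apply: hK'; exact: sub | exact: hK].
    by exists K'; split => // B [<-|Bs] u Ku; [exact: hK' | apply: hK => //; exact: sub].
  have [_ [u Ku]] := hC _ CK.
  suff /uf_exists : u (fun t => forall A, List.In A s -> A t) by [].
  elim: s {sF} hK => [|A s IH] hK; first by apply: ufS (ufT u).
  apply: ufS (ufI (hK A (or_introl erefl) u Ku) (IH (fun B Bs => hK B (or_intror Bs))))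
    => t [At h] B [<-|]; [exact: At|exact: h].
exists v => K CK; have [cK _] := hC _ CK; apply: cK => A hA; apply: hv; by exists K.
Qed.

End Ultrafilter.

Lemma ultra_colour (T : Type) (u : ultra T) r (c : T -> 'I_r) :
  exists i, u (fun x => c x = i).
Proof.
apply: contrapT => h.
have : u (fun x => forall i, i \in enum 'I_r -> c x <> i).
  by apply: uf_all => i _; rewrite ufN => ui; apply: h; exists i.
by move/uf_exists => [x /(_ (c x))]; rewrite mem_enum; apply.
Qed.

Section UltraSemigroup.
Variables (T : Type) (op : T -> T -> T).
Hypothesis opA : associative op.

Implicit Types (u v w : ultra T) (A B : T -> Prop).

Lemma umulP u v : is_ultra (fun A => u (fun x => v (fun y => A (op x y)))).
Proof.
split.
- by apply: ufS (ufT u) => x _; apply: ufT.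
- by move=> /uf_exists [x]; exact: (@uf0 _ v).
- by move=> A B hA hB; apply: ufS (ufI hA hB) => x [] h1 h2; exact: ufI.
- by move=> A B AB h; apply: ufS h => x h; apply: ufS h => y; exact: AB.
- move=> A; case: (ufC u (fun x => v (fun y => A (op x y)))) => h; first by left.
  by right; apply: ufS h => x; rewrite -ufN.
Qed.

Definition umul u v := Ultra (umulP u v).

Local Notation "u ** v" := (umul u v) (at level 40, left associativity).

Lemma umulE u v A : (u ** v) A = u (fun x => v (fun y => A (op x y))).
Proof. by []. Qed.

Lemma umulA : associative umul.
Proof.
move=> u v w; apply: ultra_ext => A; rewrite !umulE => h.
by apply: ufS h => x /= h; apply: ufS h => y h; apply: ufS h => z; rewrite opA.
Qed.

Lemma umulr_cont v : contmap (fun x => x ** v) (fun A x => v (fun y => A (op x y))).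
Proof. by []. Qed.

Definition idem u := u ** u = u.

Definition ule u v := u ** v = u /\ v ** u = u.

Lemma ule_trans u v w : ule u v -> ule v w -> ule u w.
Proof. by move=> [h1 h2] [h3 h4]; split; [rewrite -h1 -umulA h3 | rewrite -h2 umulA h4]. Qed.

Lemma ule_refl u : idem u -> ule u u. Proof. by []. Qed.

Lemma ule_anti u v : ule u v -> ule v u -> u = v.
Proof. by move=> [h1 _] [_ h4]; rewrite -h1 h4. Qed.

Definition subsemi (K : ultra T -> Prop) := forall x y, K x -> K y -> K (x ** y).

Lemma ellis (K : ultra T -> Prop) :
  uclosed K -> (exists x, K x) -> subsemi K -> exists e, K e /\ idem e.
Proof.
move=> cK neK sK.
pose P L := [/\ uclosed L, (exists x, L x) & subsemi L].
case: (@zorn_minimal _ P K (And3 cK neK sK)) => [C neC CP tot|].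
  have [//|cC neC'] := chain_inter neC _ tot; first by move=> L /CP [].
  by split => // x y hx hy L CL; have [_ _ sL] := CP _ CL; apply: sL; [apply: hx|apply: hy].
move=> L [[cL [e Le] sL] LK Lmin].
exists e; split; first exact: LK.
pose Le' y := exists2 x, L x & x ** e = y.
have PLe : P Le'.
  split; first exact: (uclosed_image (umulr_cont e) cL).
    by exists (e ** e), e.
  move=> _ _ [x Lx <-] [y Ly <-]; exists (x ** e ** y); last by rewrite !umulA.
  exact: (sL _ _ (sL _ _ Lx Le) Ly).
have LeL : forall u, Le' u -> L u by move=> _ [x Lx <-]; apply: sL.
have [x Lx xe] := Lmin _ PLe LeL _ Le.
pose B y := L y /\ y ** e = e.
have PB : P B.
  split; first exact: (uclosed_preim (umulr_cont e) (c:=e) cL).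
    by exists x.
  by move=> a b [La ae] [Lb be]; split; [apply: sL | rewrite -umulA be ae].
by have [] := Lmin _ PB (fun u => @proj1 _ _) _ Le.
Qed.

Lemma idem_below (K : ultra T -> Prop) w x :
  uclosed K -> subsemi K -> idem w -> K (x ** w) ->
  exists z, [/\ K z, z ** w = z, idem (w ** z) & ule (w ** z) w].
Proof.
move=> cK sK iw Kxw.
have [z [[Kz zw] iz]] : exists z, (K z /\ z ** w = z) /\ idem z.
  apply: ellis; first exact: (uclosed_fix (umulr_cont w) cK).
    by exists (x ** w); rewrite -umulA iw.
  by move=> a b [Ka _] [Kb bw]; split; [apply: sK | rewrite -umulA bw].
exists z; split => //; first by rewrite /idem umulA -(umulA w z w) zw -umulA iz.
by split; [rewrite -umulA zw | rewrite umulA iw].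
Qed.

Lemma minimal_idem (G : ultra T -> Prop) e : uclosed G -> subsemi G -> G e -> idem e ->
  exists f, [/\ G f, idem f, ule f e &
     forall h, G h -> idem h -> ule h f -> h = f].
Proof.
move=> cG sG Ge ie.
pose P L := [/\ uclosed L, (exists x, L x), (forall u, L u -> G u) &
   forall x y, G x -> L y -> L (x ** y)].
pose orbit h y := exists2 x, G x & x ** h = y.
have P_orbit h : G h -> P (orbit h).
  move=> Gh; split; first exact: (uclosed_image (umulr_cont h) cG).
  - by exists (h ** h), h.
  - by move=> _ [x Gx <-]; apply: sG.
  - by move=> x _ Gx [y Gy <-]; exists (x ** y); [apply: sG | rewrite umulA].
case: (@zorn_minimal _ P (orbit e) (P_orbit e Ge)) => [C [L0 CL0] CP tot|].
  have [//|cC neC] := chain_inter (ex_intro _ L0 CL0) _ tot; first by move=> L /CP [].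
  split => // [u /(_ L0 CL0)|x y Gx hy L CL]; first by have [_ _ LG _] := CP _ CL0; apply: LG.
  by have [_ _ _ Li] := CP _ CL; apply: Li => //; apply: hy.
move=> L [[cL [l0 Ll0] LG Lid] Le Lmin].
have [g [Lg ig]] : exists g, L g /\ idem g.
  apply: ellis => //; first by exists l0.
  by move=> x y Lx Ly; apply: Lid => //; apply: LG.
have [s Gs sg] := Le _ Lg.
have ge : g ** e = g by rewrite -sg -umulA ie.
exists (e ** g); split.
- by apply: sG => //; apply: LG.
- by rewrite /idem umulA -(umulA e g e) ge -umulA ig.
- by split; [rewrite -umulA ge | rewrite umulA ie].
move=> h Gh ih [hf fh].
have orbit_L : forall u, orbit h u -> L u.
  move=> _ [x Gx <-]; rewrite -hf umulA.
  by apply: (Lid); [apply: sG | apply: Lid].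
have [y Gy yh] := Lmin _ (P_orbit h Gh) orbit_L _ (Lid _ _ Ge Lg).
by rewrite -fh -yh -umulA ih.
Qed.

Section Image.
Variable f : T -> T.
Hypothesis fop : {morph f : x y / op x y}.

Lemma uimageP u : is_ultra (fun A => u (fun x => A (f x))).
Proof.
split; [exact: ufT | exact: uf0 | by move=> A B; apply: ufI | | by move=> A; apply: ufC].
by move=> A B AB; apply: ufS => x; apply: AB.
Qed.

Definition uimage u := Ultra (uimageP u).

Lemma uimage_cont : contmap uimage (fun A x => A (f x)). Proof. by []. Qed.

Lemma uimage_mul u v : uimage (u ** v) = uimage u ** uimage v.
Proof.
by apply: ultra_ext => A /=; apply: ufS => x; apply: ufS => y; rewrite fop.
Qed.

Lemma uimage_idem u : idem u -> idem (uimage u).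
Proof. by rewrite /idem -uimage_mul => ->. Qed.

Lemma uimage_le u v : ule u v -> ule (uimage u) (uimage v).
Proof. by case=> h1 h2; split; rewrite -uimage_mul ?h1 ?h2. Qed.

Lemma uimage_id_on u (D : T -> Prop) : (forall x, D x -> f x = x) -> u D -> uimage u = u.
Proof.
move=> fD uD; apply/esym/ultra_ext => A uA /=.
by apply: ufS (ufI uA uD) => x [Ax Dx]; rewrite fD.
Qed.

End Image.

Lemma uimage_id (f : T -> T) u : f =1 id -> uimage f u = u.
Proof. by move=> h; apply: ultra_ext => A /=; apply: ufS => x; rewrite h. Qed.

End UltraSemigroup.

Section RightIdeals.
Variable M : finMonoid.
Local Notation "a * b" := (mmul a b).
Local Notation "1" := (mone M).
Implicit Types a b m n y : M.

Lemma ridealP a b : reflect (exists y, b = a * y) (b \in rideal a).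
Proof. by apply: (iffP imsetP) => [[y _ ->]|[y ->]]; exists y. Qed.

Lemma rideal_subE a b : (rideal b \subset rideal a) = (b \in rideal a).
Proof.
apply/subsetP/ridealP => [sub|[y ->] _ /ridealP [z ->]].
  by apply/ridealP; apply: sub; apply/ridealP; exists 1; rewrite mmulr1.
by apply/ridealP; exists (y * z); rewrite mmulA.
Qed.

Lemma rideal_mulr a y : rideal (a * y) \subset rideal a.
Proof. by rewrite rideal_subE; apply/ridealP; exists y. Qed.

Lemma rideal_in_XM a : rideal a \in XM M.
Proof. exact: imset_f. Qed.

Section Linear.
Hypothesis HL : XM_linear M.

Lemma rideal_total a b : (rideal a \subset rideal b) || (rideal b \subset rideal a).
Proof. exact: HL (rideal_in_XM a) (rideal_in_XM b). Qed.

Lemma rideal_sub_card a b : #|rideal a| <= #|rideal b| -> rideal a \subset rideal b.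
Proof.
move=> le; case/orP: (rideal_total a b) => // sub.
by have /eqP -> : rideal b == rideal a by rewrite eqEcard sub.
Qed.

Lemma rideal_eq_card a b : #|rideal a| = #|rideal b| -> rideal a = rideal b.
Proof. by move=> e; apply/eqP; rewrite eqEsubset !rideal_sub_card // e. Qed.

End Linear.

Lemma rideal_eq_right_zero (HR : almost_R_trivial M) a a' :
  a' != a -> rideal a' = rideal a -> forall x, x * a = a.
Proof. by move=> ne e x; apply: (@HR a _ x); exists a'; split => //; apply/eqP. Qed.

End RightIdeals.

Section WordSemigroup.
Variable M : finMonoid.
Local Notation "a * b" := (mmul a b).
Local Notation "1" := (mone M).

(* A word of <(X_n)> is encoded by its support and, in place of each entry,
   the monoid element sending the distinguished point to it. *)
Definition word := seq (nat * M).

Local Notation uword := (ultra word).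
Local Notation "u ** v" := (umul (@cat _) u v) (at level 40, left associativity).
Local Notation idemW := (idem (@cat (nat * M))).
Local Notation uleW := (ule (@cat (nat * M))).
Implicit Types (u v w : uword) (x y : word).

Lemma uleW_trans u v w : uleW u v -> uleW v w -> uleW u w.
Proof. exact: (ule_trans (@catA _)). Qed.

Definition wact (m : M) x : word := map (fun p => (p.1, m * p.2)) x.

Definition uact (m : M) u := uimage (wact m) u.

Lemma wact_cat m : {morph wact m : x y / x ++ y}.
Proof. exact: map_cat. Qed.

Lemma wact_comp a b x : wact a (wact b x) = wact (a * b) x.
Proof. by rewrite /wact -map_comp; apply: eq_map => p /=; rewrite mmulA. Qed.

Lemma wact1 x : wact 1 x = x.
Proof. by elim: x => //= [[n c] x ->]; rewrite mmul1. Qed.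

Lemma uactE m u A : uact m u A = u (fun x => A (wact m x)). Proof. by []. Qed.

Lemma uact_mul m u v : uact m (u ** v) = uact m u ** uact m v.
Proof. exact: (uimage_mul (wact_cat m)). Qed.

Lemma uact_comp a b u : uact a (uact b u) = uact (a * b) u.
Proof. by apply: ultra_ext => A; rewrite !uactE; apply: ufS => x; rewrite wact_comp. Qed.

Lemma uact1 u : uact 1 u = u.
Proof. exact: (uimage_id _ wact1). Qed.

Lemma uact_idem m u : idemW u -> idemW (uact m u).
Proof. exact: (uimage_idem (wact_cat m)). Qed.

Lemma uact_le m u v : uleW u v -> uleW (uact m u) (uact m v).
Proof. exact: (uimage_le (wact_cat m)). Qed.

Lemma uclosed_uact_eq m c : uclosed (fun u => uact m u = c).
Proof.
have cT : uclosed (fun _ : uword => True) by [].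
move=> v hv; have [] // := uclosed_preim (uimage_cont (wact m)) (c := c) cT (v := v).
by move=> A hA; apply: hv => u hu; apply: hA.
Qed.

Lemma uclosed_uact_eqs (P : M -> Prop) (c : M -> uword) :
  uclosed (fun u => forall n, P n -> uact n u = c n).
Proof.
apply: (@uclosed_inter _ M (fun n u => P n -> uact n u = c n)) => n.
by apply: uclosed_impl => _; apply: uclosed_uact_eq.
Qed.

Definition maxi x := foldr maxn 0 (map fst x).

Lemma maxiP x p : p \in x -> p.1 <= maxi x.
Proof.
elim: x => //= q x IH; rewrite inE => /orP [/eqP ->|/IH h]; first exact: leq_maxl.
exact: leq_trans h (leq_maxr _ _).
Qed.

Definition block (N : nat) x : Prop :=
  [/\ x != [::], sorted ltn (map fst x) & all (fun p => N <= p.1) x].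

Lemma sorted_cat_lt (s1 s2 : seq nat) :
  sorted ltn s1 -> sorted ltn s2 -> (forall a b, a \in s1 -> b \in s2 -> a < b) ->
  sorted ltn (s1 ++ s2).
Proof.
rewrite !(sorted_pairwise ltn_trans) pairwise_cat => -> -> h; rewrite !andbT.
by apply/allrelP => a b; apply: h.
Qed.

Lemma block_cat N x y : block N x -> block (maxi x).+1 y -> block N (x ++ y).
Proof.
case: x => [[]//|p x [_ sx ax] [_ sy ay]]; split => //.
- rewrite map_cat; apply: sorted_cat_lt => // a b /mapP [q qx ->] /mapP [q' q'y ->].
  by apply: leq_ltn_trans (maxiP qx) _; move/allP: ay; apply.
- rewrite all_cat ax /=; apply/allP => q qy; move/allP: ay => /(_ q qy).
  apply: leq_trans; move/allP: ax => /(_ p (mem_head _ _)) h.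
  by apply: leq_trans h _; apply: leq_trans (maxiP (mem_head p x)) _.
Qed.

Lemma block_wact N m x : block N (wact m x) <-> block N x.
Proof. by rewrite /block /wact -map_comp all_map; case: x. Qed.

Definition late u := forall N, u (block N).

Lemma late_mul u v : late u -> late v -> late (u ** v).
Proof.
move=> lu lv N; apply: ufS (lu N) => x bx.
by apply: ufS (lv (maxi x).+1) => y /(block_cat bx).
Qed.

Lemma late_uact m u : late u -> late (uact m u).
Proof. by move=> lu N; apply: ufS (lu N) => x /block_wact. Qed.

Lemma uclosed_late : uclosed late.
Proof. by move=> v hv N; apply: hv => u; apply. Qed.

Definition has1 x : Prop := has (fun p => p.2 == 1) x.

Lemma has1_mull u v : u has1 -> (u ** v) has1.
Proof. by apply: ufS => x hx; apply: ufS (ufT v) => y _; rewrite /has1 has_cat hx. Qed.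

Lemma has1_mulr u v : v has1 -> (u ** v) has1.
Proof.
move=> hv; apply: ufS (ufT u) => x _.
by apply: ufS hv => y hy; rewrite /has1 has_cat hy orbT.
Qed.

Definition within (I : {set M}) x : Prop := all (fun p => p.2 \in I) x.

Lemma within_mul (I : {set M}) u v :
  u (within I) -> v (within I) -> (u ** v) (within I).
Proof.
move=> uI vI; apply: ufS uI => x hx.
by apply: ufS vI => y hy; rewrite /within all_cat hx.
Qed.

Lemma within_uact m u : uact m u (within (rideal m)).
Proof.
apply: ufS (ufT u) => x _; rewrite /within /wact all_map.
by apply/allP => p _ /=; apply/ridealP; exists p.2.
Qed.

Lemma within_sub (I J : {set M}) u : I \subset J -> u (within I) -> u (within J).
Proof. by move=> /subsetP IJ; apply: ufS => x /allP h; apply/allP => p /h /IJ. Qed.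

Lemma uact_id_within m (I : {set M}) u :
  (forall c, c \in I -> m * c = c) -> u (within I) -> uact m u = u.
Proof.
move=> h; apply: uimage_id_on => x /allP hx; rewrite /wact.
elim: x hx => //= [[n c] x IH] hx; rewrite h ?IH ?(hx (n, c)) ?mem_head //.
by move=> p px; apply: hx; rewrite inE px orbT.
Qed.

Definition good v := [/\ late v, v has1 & idemW v].

Lemma exists_good : exists v, good v.
Proof.
pose K u := late u /\ u has1.
have [u hu] : exists u : uword, forall A, ((exists N, A = block N) \/ A = has1) -> u A.
  apply: ultra_of_fip => s sF.
  suff [N0 h] : exists N0, forall N, N0 <= N -> forall A, List.In A s -> A [:: (N, 1)].
    by exists [:: (N0, 1)]; apply: h.
  elim: s sF => [|A s IH] sF; first by exists 0.
  have [|N0 h] := IH; first by move=> B Bs; apply: sF; right.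
  case: (sF A (or_introl erefl)) => [[N ->]|->].
  - exists (maxn N N0) => N' hN' B [<-|Bs].
      by split => //=; rewrite andbT; apply: leq_trans hN'; apply: leq_maxl.
    by apply: h => //; apply: leq_trans hN'; apply: leq_maxr.
  - by exists N0 => N' hN' B [<-|Bs]; [rewrite /has1 /= eqxx | exact: h].
have cK : uclosed K := uclosedI uclosed_late (@uclosed_mem _ has1).
have [e [[le he] ie]] : exists e, K e /\ idemW e.
  apply: (ellis (@catA _) cK).
  - by exists u; split; [move=> N; apply: hu; left; exists N | apply: hu; right].
  - by move=> x y [lx hx] [ly _]; split; [apply: late_mul | apply: has1_mull].
by exists e.
Qed.

End WordSemigroup.

Arguments has1 {M} x.

Section MonotoneIdempotent.
Variable M : finMonoid.
Local Notation "a * b" := (mmul a b).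
Local Notation "1" := (mone M).
Local Notation uword := (ultra (word M)).
Local Notation "u ** v" := (umul (@cat _) u v) (at level 40, left associativity).
Local Notation idemW := (idem (@cat (nat * M))).
Local Notation uleW := (ule (@cat (nat * M))).
Implicit Types (u v w : uword) (m n y : M).

Hypotheses (HL : XM_linear M) (HR : almost_R_trivial M).

Definition monotone_upto v t :=
  forall n m, #|rideal n| < t -> uleW (uact n v) (uact (n * m) v).

Section Step.
Variables (v : uword) (t : nat) (r : M).
Hypotheses (gv : good v) (Pv : monotone_upto v t) (rt : #|rideal r| = t).

Local Notation small n := (#|rideal n| < t).
Local Notation same n := (rideal n = rideal r).

Lemma small_mul n m : small n -> small (n * m).
Proof. exact: leq_ltn_trans (subset_leq_card (rideal_mulr n m)). Qed.

Lemma same_mul n m : same n -> small (n * m) \/ same (n * m).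
Proof.
move=> Rn; have := subset_leq_card (rideal_mulr n m).
rewrite Rn rt leq_eqVlt => /orP [/eqP e|]; last by left.
by right; apply: (rideal_eq_card HL); rewrite e rt.
Qed.

Lemma small_in_r n : small n -> exists y, n = r * y.
Proof.
move=> sn; apply/ridealP; rewrite -rideal_subE.
by apply: (rideal_sub_card HL); rewrite rt ltnW.
Qed.

Lemma small_max : (exists n, small n) ->
  exists n1, small n1 /\ forall n, small n -> uleW (uact n1 v) (uact n v).
Proof.
case=> n0 sn0; case: (@arg_maxnP _ n0 (fun n => small n) (fun n => #|rideal n|) sn0) => n1 sn1 mx.
exists n1; split => // n sn.
have := rideal_sub_card HL (mx n sn); rewrite rideal_subE => /ridealP [y ->].
exact: Pv.
Qed.

Lemma uact_idem_v n : idemW (uact n v).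
Proof. by case: gv => _ _ /uact_idem. Qed.

Definition agrees x := late x /\ x has1 /\ forall n, small n -> uact n x = uact n v.

Lemma uclosed_agrees : uclosed agrees.
Proof.
exact (uclosedI (@uclosed_late M) (uclosedI (@uclosed_mem _ has1)
  (@uclosed_uact_eqs M (fun n => small n) (fun n => uact n v)))).
Qed.

Lemma subsemi_agrees : subsemi (@cat _) agrees.
Proof.
move=> x y [lx [hx ex]] [ly [_ ey]]; split; first exact: late_mul.
split; first exact: has1_mull.
by move=> n sn; rewrite uact_mul ex // ey //; apply: uact_idem_v.
Qed.

Definition step_spec v' := [/\ good v', forall n, small n -> uact n v' = uact n v,
  forall r1, same r1 -> forall n, small n -> uleW (uact r1 v') (uact n v) &
  forall r1 r2, same r1 -> same r2 -> uact r1 v' = uact r2 v'].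

Lemma step_spec_monotone v' : step_spec v' -> monotone_upto v' t.+1.
Proof.
case=> [[_ _ iv'] ev' lev' eqv'] n m.
rewrite ltnS leq_eqVlt => /orP [/eqP e|sn].
- have Rn : same n by apply: (rideal_eq_card HL); rewrite e rt.
  case: (same_mul m Rn) => [snm|Rnm]; first by rewrite (ev' _ snm); apply: lev'.
  by rewrite (eqv' _ _ Rnm Rn); apply/ule_refl/uact_idem.
- by rewrite !ev' //; [apply: Pv | apply: small_mul].
Qed.

Lemma step_singleton_class : (forall r1, same r1 -> r1 = r) -> exists v', step_spec v'.
Proof.
move=> Rr; have [lv hv iv] := gv.
case: (pselect (exists n, small n)) => [exN|nN]; last first.
  exists v; split => // [r1 _ n sn|r1 r2 /Rr -> /Rr ->] //.
  by case: nN; exists n.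
have [n1 [sn1 min_n1]] := small_max exN.
have [y ey] := small_in_r sn1.
have agrees_vw : agrees (v ** uact y v).
  split; first by apply: late_mul => //; apply: late_uact.
  split; first exact: has1_mull.
  by move=> n sn; rewrite uact_mul uact_comp; case: (Pv y sn).
have [z [[lz [hz ez]] _ iwz lewz]] :=
  idem_below (@catA _) uclosed_agrees subsemi_agrees (uact_idem y iv) agrees_vw.
exists (uact y v ** z); split.
- by split => //; [apply: late_mul => //; apply: late_uact | apply: has1_mulr].
- by move=> n sn; rewrite uact_mul ez // uact_comp; case: (Pv y sn).
- move=> r1 /Rr -> n sn; apply: uleW_trans (min_n1 n sn).
  by have := uact_le r lewz; rewrite uact_comp -ey.
- by move=> r1 r2 /Rr -> /Rr ->.
Qed.

Section RightZeroClass.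
Hypothesis rz : forall r1, same r1 -> forall x, x * r1 = r1.

Lemma same_fix r1 : same r1 -> forall c, c \in rideal r -> r1 * c = c.
Proof. by move=> Rr1 c /ridealP [x ->]; rewrite mmulA (rz (erefl _)). Qed.

Definition on_r h :=
  late h /\ h (within (rideal r)) /\ forall n, small n -> uact n h = uact (n * r) v.

Lemma uclosed_on_r : uclosed on_r.
Proof.
exact (uclosedI (@uclosed_late M) (uclosedI (@uclosed_mem _ (within (rideal r)))
  (@uclosed_uact_eqs M (fun n => small n) (fun n => uact (n * r) v)))).
Qed.

Lemma subsemi_on_r : subsemi (@cat _) on_r.
Proof.
move=> x y [lx [wx ex]] [ly [wy ey]]; split; first exact: late_mul.
split; first exact: within_mul.
by move=> n sn; rewrite uact_mul ex // ey //; apply: uact_idem_v.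
Qed.

Lemma on_r_uact_r : on_r (uact r v).
Proof.
have [lv _ _] := gv; split; first exact: late_uact.
by split; [apply: within_uact | move=> n _; rewrite uact_comp].
Qed.

Lemma on_r_idem_below_small :
  exists g0, [/\ on_r g0, idemW g0 & forall n, small n -> uleW g0 (uact n v)].
Proof.
have [lv _ iv] := gv.
case: (pselect (exists n, small n)) => [exN|nN]; last first.
  have [g0 [og0 ig0]] := ellis (@catA _) uclosed_on_r (ex_intro _ _ on_r_uact_r) subsemi_on_r.
  by exists g0; split => // n sn; case: nN; exists n.
have [n1 [sn1 min_n1]] := small_max exN.
have [y ey] := small_in_r sn1.
have wf : uact n1 v (within (rideal r)).
  apply: within_sub (within_uact n1 v).
  by rewrite rideal_subE ey; apply/ridealP; exists y.
have on_r_rf : on_r (uact r v ** uact n1 v).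
  have [lr [wr er]] := on_r_uact_r.
  split; first by apply: late_mul => //; apply: late_uact.
  split; first exact: within_mul.
  move=> n sn; rewrite uact_mul er // uact_comp ey mmulA.
  by case: (Pv y (small_mul r sn)).
have [z [[lz [wz ez]] _ ifz lefz]] :=
  idem_below (@catA _) uclosed_on_r subsemi_on_r (uact_idem n1 iv) on_r_rf.
exists (uact n1 v ** z); split => //; last by move=> n sn; apply: uleW_trans lefz (min_n1 n sn).
split; first by apply: late_mul => //; apply: late_uact.
split; first exact: within_mul.
move=> n sn; rewrite uact_mul ez // uact_comp ey mmulA.
by case: (Pv y (small_mul r sn)).
Qed.

Lemma step_right_zero_class : exists v', step_spec v'.
Proof.
have [lv hv iv] := gv.
have [g0 [og0 ig0 leg0]] := on_r_idem_below_small.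
have [g [[lg [wg eg]] ig leg min_g]] :=
  minimal_idem (@catA _) uclosed_on_r subsemi_on_r og0 ig0.
have agrees_vg : agrees (v ** g).
  split; first exact: late_mul.
  split; first exact: has1_mull.
  by move=> n sn; rewrite uact_mul eg //; case: (Pv r sn).
have [z [[lz [hz ez]] _ igz legz]] :=
  idem_below (@catA _) uclosed_agrees subsemi_agrees ig agrees_vg.
have ev' : forall n, small n -> uact n (g ** z) = uact n v.
  by move=> n sn; rewrite uact_mul eg // ez //; case: (Pv r sn).
have uact_same_v' : forall r1, same r1 -> uact r1 (g ** z) = g.
  move=> r1 Rr1; apply: min_g; last first.
  - by have := uact_le r1 legz; rewrite (uact_id_within (same_fix Rr1) wg).
  - exact: uact_idem.
  split; first by apply: late_uact; apply: late_mul.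
  split; first by apply: within_sub (within_uact r1 _); rewrite Rr1.
  move=> n sn; rewrite uact_comp ev'; last exact: small_mul.
  apply: (ule_anti (op := @cat (nat * M))).
  - by have := Pv r (small_mul r1 sn); rewrite -mmulA (rz (erefl _)).
  - by have := Pv r1 (small_mul r sn); rewrite -mmulA (rz Rr1).
exists (g ** z); split.
- by split; [apply: late_mul | apply: has1_mulr |].
- exact: ev'.
- by move=> r1 Rr1 n sn; rewrite uact_same_v' //; apply: uleW_trans leg (leg0 n sn).
- by move=> r1 r2 R1 R2; rewrite !uact_same_v'.
Qed.

End RightZeroClass.

End Step.

Lemma monotone_step v t : good v -> monotone_upto v t ->
  exists v', good v' /\ monotone_upto v' t.+1.
Proof.
move=> gv Pv; case: (pselect (exists r : M, #|rideal r| = t)) => [[r rt]|nr]; last first.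
  exists v; split => // n m; rewrite ltnS leq_eqVlt => /orP [/eqP e|]; last exact: Pv.
  by case: nr; exists n.
suff [v' sv'] : exists v', step_spec v t r v'.
  by exists v'; split; [case: sv' | exact: step_spec_monotone sv'].
case: (pselect (exists r', r' != r /\ rideal r' = rideal r)) => [[r' [ne e]]|nR].
  apply: step_right_zero_class => // r1 Rr1.
  case: (eqVneq r1 r) => [->|ne1]; first exact: (rideal_eq_right_zero HR ne e).
  by apply: (rideal_eq_right_zero HR (a' := r)); rewrite // eq_sym.
apply: step_singleton_class => // r1 Rr1.
by apply: contrapT => ne; apply: nR; exists r1; split => //; apply/eqP.
Qed.

Lemma exists_monotone_idem :
  exists u, [/\ late u, u has1, idemW u & forall m, uleW u (uact m u)].
Proof.
have [v0 gv0] := exists_good M.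
have [v [[lv hv iv] Pv]] : exists v, good v /\ monotone_upto v #|M|.+1.
  elim: #|M|.+1 => [|t [v [gv Pv]]]; first by exists v0.
  exact: monotone_step gv Pv.
exists v; split => // m.
by have := Pv 1 m; rewrite uact1 mmul1; apply; rewrite ltnS max_card.
Qed.

End MonotoneIdempotent.

Section GalvinGlazer.
Variable M : finMonoid.
Local Notation "a * b" := (mmul a b).
Local Notation "1" := (mone M).
Local Notation uword := (ultra (word M)).
Local Notation "u ** v" := (umul (@cat _) u v) (at level 40, left associativity).
Local Notation uleW := (ule (@cat (nat * M))).
Implicit Types (x y w : word M) (m k : M).

Hypothesis HL : XM_linear M.
Variables (r : nat) (c : word M -> 'I_r) (u : uword) (col : 'I_r).
Hypotheses (lu : late u) (hu : u has1) (mu : forall m, uleW u (uact m u)).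
Hypothesis ucol : u (fun x => c x = col).

Lemma uact_mul_chain m k B : uact m u B -> uact k u B -> (uact m u ** uact k u) B.
Proof.
have le_mul (a y : M) : uleW (uact a u) (uact (a * y) u) by rewrite -uact_comp; apply: uact_le.
move=> hm hk; case/orP: (rideal_total HL m k); rewrite rideal_subE => /ridealP [y ->].
- by case: (le_mul k y) => _ ->.
- by case: (le_mul m y) => ->.
Qed.

(* The flag [b] records whether [x] already contains a letter [1], in which
   case [x] itself must have colour [col]. *)
Definition promising x (b : bool) : Prop :=
  if b then c x = col /\ forall m, uact m u (fun y => c (x ++ y) = col)
  else u (fun y => c (x ++ y) = col).

Lemma promising_ext x b m :
  promising x b -> u (fun w => promising (x ++ wact m w) (b || (m == 1))).
Proof.
case: b => /=.
- move=> [cx hx].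
  have hk : u (fun w => forall k, k \in enum M ->
                 uact k u (fun y => c ((x ++ wact m w) ++ y) = col)).
    apply: uf_all => k _.
    have := uact_mul_chain (m := m) (k := k) (B := fun y => c (x ++ y) = col) (hx m) (hx k).
    by rewrite umulE uactE; apply: ufS => w; apply: ufS => y; rewrite catA.
  apply: ufS (ufI (hx m) hk) => w [cw hw]; split => // k.
  by apply: hw; rewrite mem_enum.
- move=> hx; case: (eqVneq m 1) => [->|ne] /=.
  + have hk : u (fun w => forall k, k \in enum M ->
                   uact k u (fun y => c ((x ++ w) ++ y) = col)).
      apply: uf_all => k _; case: (mu k) => e _; move: hx; rewrite -{1}e umulE.
      by apply: ufS => w; apply: ufS => y; rewrite catA.
    apply: ufS (ufI hx hk) => w [cw hw]; rewrite wact1; split => // k.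
    by apply: hw; rewrite mem_enum.
  + case: (mu m) => _ e; move: hx; rewrite -{1}e umulE uactE.
    by apply: ufS => w; apply: ufS => y; rewrite catA.
Qed.

Definition next_block (P : seq (word M * bool)) (N : nat) w : Prop :=
  [/\ block N w, has1 w &
      forall q, q \in P -> forall m, promising (q.1 ++ wact m w) (q.2 || (m == 1))].

Lemma exists_next_block P N :
  (forall q, q \in P -> promising q.1 q.2) -> exists w, next_block P N w.
Proof.
move=> hP.
have h : u (fun w => forall q, q \in P -> forall m, m \in enum M ->
    promising (q.1 ++ wact m w) (q.2 || (m == 1))).
  by apply: uf_all => q qP; apply: uf_all => m _; exact: promising_ext (hP q qP).
have [w [[bw hw] Pw]] := uf_exists (ufI (ufI (lu N) hu) h).
by exists w; split => // q qP m; apply: Pw => //; rewrite mem_enum.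
Qed.

Definition pick_block P N : word M :=
  if pselect (exists w, next_block P N w) is left h then proj1_sig (cid h) else [::].

Lemma pick_blockP P N : (exists w, next_block P N w) -> next_block P N (pick_block P N).
Proof. by rewrite /pick_block; case: pselect => // h _; case: (cid h). Qed.

(* Stage [n] records every combination of the first [n] blocks, acted on by
   arbitrary monoid elements, together with the bound beyond which the next
   block must start. *)
Fixpoint stage (n : nat) : seq (word M * bool) * nat :=
  if n is n'.+1 then
    let P := (stage n').1 in let w := pick_block P (stage n').2 in
    (P ++ [seq (q.1 ++ wact m w, q.2 || (m == 1)) | q <- P, m <- enum M], (maxi w).+1)
  else ([:: ([::], false)], 0).

Definition blocks n := pick_block (stage n).1 (stage n).2.

Lemma stage_promising n q : q \in (stage n).1 -> promising q.1 q.2.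
Proof.
elim: n q => [|n IH] q /=; first by rewrite inE => /eqP -> /=.
rewrite mem_cat => /orP [/IH //|/allpairsP [[q' m] [q'P _ ->]] /=].
by have [_ _] := pick_blockP (exists_next_block (stage n).2 IH); apply.
Qed.

Lemma blocks_next n : next_block (stage n).1 (stage n).2 (blocks n).
Proof. exact: pick_blockP (exists_next_block _ (@stage_promising n)). Qed.

Lemma stage_bound_mono (n k : nat) : n <= k -> (stage n).2 <= (stage k).2.
Proof.
elim: k => [|k IH]; first by rewrite leqn0 => /eqP ->.
rewrite leq_eqVlt => /orP [/eqP ->//|/IH h]; apply: leq_trans h _ => /=.
have [[w0 _ aw] _ _] := blocks_next k; rewrite /blocks in w0 aw.
case: (pick_block _ _) w0 aw => // p x _ /= /andP [h _].
by apply: leq_trans h _; apply: leq_trans (maxiP (mem_head p x)) _.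
Qed.

Lemma blocks_sep i j : i < j -> forall p q, p \in blocks i -> q \in blocks j -> p.1 < q.1.
Proof.
move=> ij p q pi qj; have [[_ _ /allP aw] _ _] := blocks_next j.
apply: leq_trans (aw q qj); apply: leq_trans (stage_bound_mono ij); exact: maxiP.
Qed.

Definition combination (s : seq (nat * M)) : word M :=
  flatten (map (fun p => wact p.2 (blocks p.1)) s).

Lemma sorted_rcons_lt (s : seq (nat * M)) p :
  sorted ltn (map fst (rcons s p)) -> sorted ltn (map fst s) /\ forall q, q \in s -> q.1 < p.1.
Proof.
rewrite map_rcons -cats1 !(sorted_pairwise ltn_trans) pairwise_cat => /and3P [h1 h2 _].
by split => // q qs; move/allrelP: h1; apply; [exact: map_f | exact: mem_head].
Qed.

Lemma combination_in_stage n (s : seq (nat * M)) :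
  sorted ltn (map fst s) -> all (fun p => p.1 < n) s ->
  (combination s, has (fun p => p.2 == 1) s) \in (stage n).1.
Proof.
elim: n s => [|n IH] s; first by case: s => //= p s _ /andP [].
case/lastP: s => [|s p] ss al; first by rewrite /= mem_cat (IH [::]).
have [ss' lt] := sorted_rcons_lt ss.
move: al; rewrite all_rcons ltnS leq_eqVlt => /andP [/orP [/eqP pn|pn] al].
- rewrite /= mem_cat; apply/orP; right; apply/allpairsP.
  exists ((combination s, has (fun p => p.2 == 1) s), p.2); split.
  + by apply: IH => //; apply/allP => q qs; rewrite -pn; exact: lt.
  + exact: mem_enum.
  + by rewrite /combination map_rcons flatten_rcons has_rcons orbC /= pn.
- rewrite /= mem_cat IH // all_rcons pn /=.
  by apply/allP => q qs; exact: ltn_trans (lt q qs) pn.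
Qed.

Lemma combination_col (s : seq (nat * M)) :
  sorted ltn (map fst s) -> has (fun p => p.2 == 1) s -> c (combination s) = col.
Proof.
move=> ss hs.
have al : all (fun p => p.1 < (maxi s).+1) s by apply/allP => p ps; rewrite ltnS maxiP.
by have /stage_promising := combination_in_stage ss al; rewrite hs => -[].
Qed.

End GalvinGlazer.

Section Realize.
Variable M : finMonoid.
Variables (X : nat -> Type) (act : forall n, M -> X n -> X n) (pt : forall n, X n).
Hypothesis hpt : forall n, is_pointed_Mset (@act n) (pt n).

Definition realize (x : word M) : seq (letter X) :=
  map (fun p => existT X p.1 (act p.2 (pt p.1))) x.

Lemma realize_fst x : map (@projT1 _ _) (realize x) = map fst x.
Proof. by elim: x => //= p x ->. Qed.

Lemma realize_flatten (I : Type) (f : I -> word M) (s : seq I) :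
  flatten (map (realize \o f) s) = realize (flatten (map f s)).
Proof. by elim: s => //= p s ->; rewrite /realize map_cat. Qed.

Lemma realize_wact a x : act_word act a (realize x) = realize (wact a x).
Proof. by elim: x => //= p x ->; have [_ -> _] := hpt p.1. Qed.

Lemma realize_has_pt x : has1 x -> has_pt_entry pt (realize x).
Proof.
case/hasP => p px /eqP p1; case/splitPr: px => y z.
exists p.1, (realize y), (realize z).
by rewrite /realize map_cat /= p1; have [-> _ _] := hpt p.1.
Qed.

Lemma sorted_flatten_blocks (w : nat -> word M) (s : seq nat) :
  (forall i, sorted ltn (map fst (w i))) ->
  (forall i j, i < j -> forall p q, p \in w i -> q \in w j -> p.1 < q.1) ->
  sorted ltn s -> sorted ltn (map fst (flatten (map w s))).
Proof.
move=> sw sep; rewrite !(sorted_pairwise ltn_trans).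
elim: s => //= i s IH /andP [ai ps]; rewrite map_cat pairwise_cat IH // andbT.
rewrite -(sorted_pairwise ltn_trans) sw andbT.
apply/allrelP => a b /mapP [p pw ->] /mapP [q /flattenP [y /mapP [j js ->] qw] ->].
by apply: (sep i j) => //; move/allP: ai; apply.
Qed.

Lemma basic_realize (w : nat -> word M) :
  (forall i, block 0 (w i)) ->
  (forall i j, i < j -> forall p q, p \in w i -> q \in w j -> p.1 < q.1) ->
  basic (realize \o w).
Proof.
move=> bw sep; split=> [i | [//|i s] _ ss].
  have [w0 sw _] := bw i; split; last by rewrite /= realize_fst.
  by move: w0; rewrite /= /realize; case: (w i).
rewrite realize_flatten; split.
  by have [] := bw i; rewrite /realize /=; case: (w i).
rewrite realize_fst; apply: sorted_flatten_blocks => // j.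
by have [] := bw j.
Qed.

End Realize.

Theorem ramsey_of_linear (M : finMonoid) :
  almost_R_trivial M -> XM_linear M -> ramsey_monoid M.
Proof.
move=> HR HL X act pt hpt r c.
have [u [lu hu _ mu]] := exists_monotone_idem HL HR.
have [col ucol] := ultra_colour u (fun x => c (realize act pt x)).
pose w := blocks (fun x => c (realize act pt x)) u col.
have next i := blocks_next HL lu hu mu ucol i.
have bw i : block 0 (w i).
  by have [[w0 sw /allP aw] _ _] := next i; split => //; apply/allP.
exists (realize act pt \o w); split.
- exact: basic_realize bw (blocks_sep HL lu hu mu ucol).
- by move=> i; apply: realize_has_pt; have [] := next i.
exists col => s _ ss [p ps p1].
rewrite -(combination_col HL lu hu mu ucol ss); last by apply/hasP; exists p => //; apply/eqP.
rewrite /combination -realize_flatten; congr (c (flatten _)).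
by apply: eq_map => q /=; rewrite realize_wact.
Qed.

Section NonLinear.
Variable M : finMonoid.
Local Notation "a * b" := (mmul a b).
Local Notation XT := (fun _ : nat => XM_t M).
Local Notation actX := (fun _ : nat => @XM_act M).
Local Notation ptX := (fun _ : nat => XM_pt M).

Lemma XM_act_sub a (K : XM_t M) : val (XM_act a K) \subset rideal a.
Proof. by apply/subsetP => y /imsetP [x _ ->]; apply/ridealP; exists x. Qed.

Lemma imset_mul_rideal1 a : [set a * x | x in rideal (mone M)] = rideal a.
Proof.
apply/setP => y; apply/imsetP/ridealP => [[x /ridealP [z ->] ->]|[z ->]].
  by exists z; rewrite mmul1.
by exists (mone M * z); [apply/ridealP; exists z | rewrite mmul1].
Qed.

Lemma XM_pointed : is_pointed_Mset (@XM_act M) (XM_pt M).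
Proof.
split.
- move=> K; apply: val_inj; apply/setP => y /=.
  apply/imsetP/idP => [[x xK ->]|yK]; first by rewrite mmul1.
  by exists y; rewrite ?mmul1.
- move=> a b K; apply: val_inj; apply/setP => y /=.
  apply/imsetP/imsetP => [[x /imsetP [z zK ->] ->]|[z zK ->]].
    by exists z; rewrite ?mmulA.
  by exists (b * z); [apply/imsetP; exists z | rewrite mmulA].
- move=> [K hK]; case/imsetP: (hK) => a _ eK.
  by exists a; apply: val_inj; rewrite /= imset_mul_rideal1.
Qed.

Definition letter_sets (x : seq (letter XT)) : seq {set M} :=
  [seq val (projT2 l) | l : letter XT <- x].

Lemma head_filter_act (S : {set {set M}}) a x rest :
  rideal a \in S -> (forall K, K \in S -> K \subset rideal a -> K = rideal a) ->
  has_pt_entry ptX x ->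
  ohead [seq K <- letter_sets (act_word actX a x ++ rest) | K \in S] = Some (rideal a).
Proof.
move=> aS minS [n [y [z ->]]].
rewrite /letter_sets /act_word !map_cat /= imset_mul_rideal1 -catA.
elim: y => /= [|l y IH]; first by rewrite aS.
by case: ifP => // KS; rewrite (minS _ KS) ?XM_act_sub.
Qed.

Theorem not_ramsey_of_nonlinear : ~ XM_linear M -> ~ ramsey_prop actX ptX.
Proof.
move=> nL RP.
have [I [J [/imsetP [a _ ->] /imsetP [b _ ->] nab nba]]] : exists I J,
    [/\ I \in XM M, J \in XM M, ~~ (I \subset J) & ~~ (J \subset I)].
  apply: contrapT => h; apply: nL => I J hI hJ; apply/negPn/negP => /norP [? ?].
  by apply: h; exists I, J.
pose S := [set rideal a; rideal b].
pose first_set x := ohead [seq K <- letter_sets x | K \in S].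
pose c x : 'I_2 := if first_set x == Some (rideal a) then ord_max else ord0.
have [w [_ hp [col hcol]]] := RP 2 c.
pose pair m := act_word actX m (w 0) ++ act_word actX (mone M) (w 1) ++ [::].
have colour_pair m : c (pair m) = col.
  apply: (hcol [:: (0, m); (1, mone M)]) => //.
  by exists (1, mone M); rewrite ?inE ?eqxx ?orbT.
have first_pair m : rideal m \in S ->
    (forall K, K \in S -> K \subset rideal m -> K = rideal m) ->
    first_set (pair m) = Some (rideal m).
  by move=> mS minS; apply: head_filter_act (hp 0).
have first_a : first_set (pair a) = Some (rideal a).
  apply: first_pair; first by rewrite !inE eqxx.
  by move=> K; rewrite !inE => /orP [] /eqP -> // /(negP nba).
have first_b : first_set (pair b) = Some (rideal b).
  apply: first_pair; first by rewrite !inE eqxx orbT.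
  by move=> K; rewrite !inE => /orP [] /eqP -> // /(negP nab).
have := colour_pair b; rewrite -(colour_pair a) /c first_a first_b eqxx.
by case: eqP => // [[eab]]; move: nab; rewrite eab subxx.
Qed.

End NonLinear.

Theorem corollary4p5 (M : finMonoid) :
  (almost_R_trivial M -> XM_linear M -> ramsey_monoid M) /\
  (~ XM_linear M ->
     ~ ramsey_prop (X := fun _ : nat => XM_t M)
                   (fun _ => @XM_act M) (fun _ => XM_pt M)) /\
  (almost_R_trivial M -> (ramsey_monoid M <-> XM_linear M)).
Proof.
split; first exact: ramsey_of_linear.
split; first exact: not_ramsey_of_nonlinear.
move=> HR; split => [RM|]; last exact: ramsey_of_linear.
apply: contrapT => nL; apply: (not_ramsey_of_nonlinear nL).
by apply: RM => n; apply: XM_pointed.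
Qed.
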